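(* Let $\varphi$ be a rule and $\mathbb{S}$ a pick-an-object mechanism that sequentializes $\varphi$, and let $h^A\in H^A_{\mathbb{S}}$ be any collective history of $\mathbb{S}$. Let $P\in\mathcal{P}$ be any preference profile, $\sigma^P$ the profile of straightforward strategies with respect to $P$, $a^*$ any agent, and $\sigma'$ any other strategy for $a^*$. Then there exist a set $I\subseteq O$, an ordering $\gamma$ of the elements of $I$, a preference $P^*\in\mathbb{P}$, and preferences $P'_{-a^*}$ of the agents other than $a^*$ such that $$\mathcal{O}_{a^*}|_{h^A}(\sigma^P_{a^*},\sigma^P_{-a^*})=\varphi_{a^*}\big(\gamma\oplus P_{a^*}|_{O\setminus I},\,P'_{-a^*}\big)$$ and $$\mathcal{O}_{a^*}|_{h^A}(\sigma',\sigma^P_{-a^*})=\varphi_{a^*}\big(\gamma\oplus P^*|_{O\setminus I},\,P'_{-a^*}\big).$$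
   Context: Let $A=\{a_1,\dots,a_n\}$ be a finite set of agents and $O=\{o_1,\dots,o_m\}\cup\{\emptyset\}$ a finite set of object types ($\emptyset$ the null object). Each agent has a strict preference over $O$; $\mathbb{P}$ is the set of strict preferences, $\mathcal{P}=\mathbb{P}^n$ the set of profiles. An allocation is $\mu:A\to O$; a rule $\varphi$ maps profiles to allocations, $\varphi_a(P)=\varphi(P)(a)$. For a preference $Q$ and a set $J\subseteq O$, $Q|_J$ is the ordering $Q$ restricted to $J$; for an ordering $\gamma$ of $I\subseteq O$, $\gamma\oplus Q|_{O\setminus I}$ is the preference ranking the elements of $I$ first in the order $\gamma$, followed by the elements of $O\setminus I$ in the order given by $Q$. PAO mechanisms: a choice history is a finite (possibly empty) sequence $((\Omega_1,\omega_1),\dots,(\Omega_k,\omega_k))$, $\Omega_j\subseteq O$, $\omega_j\in\Omega_j$, with last choice $\omega_k$. A collective history is an $n$-tuple of choice histories ($h^{A-\emptyset}$: all empty). A menu function $\mathbb{S}$ maps collective histories to $n$-tuples of subsets of $O$, with non-empty initial menus and, afterwards, agent $i$'s menu a subset of her last menu minus her last choice. The PAO mechanism $\mathbb{S}$: in period 1 every agent chooses from her initial menu; in each later period, given the current collective history $h^A$, if all menus in $\mathbb{S}(h^A)$ are empty the procedure stops and each agent receives her last choice; otherwise agents with non-empty menus choose an element; (menu, choice) is appended to each chooser's history. $H^A_{\mathbb{S}}$ is the set of collective histories that can arise. A strategy for agent $a$ maps each pair (own past history, current menu $\Omega$) to an element of $\Omega$. The straightforward strategy w.r.t. $P_a$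 always chooses the $P_a$-best element of the menu. $\mathbb{S}$ sequentializes $\varphi$ if straightforward play w.r.t. any $P$ yields $\varphi(P)$. For $h^A\in H^A_{\mathbb{S}}$ and a strategy profile $\sigma$, $\mathcal{O}_a|_{h^A}(\sigma)$ denotes agent $a$'s assignment when $\mathbb{S}$ is run starting from $h^A$ with agents following $\sigma$. *)

From mathcomp Require Import all_boot.
Set Implicit Arguments. Unset Strict Implicit. Unset Printing Implicit Defensive.

Section PAO.
Variables (n : nat) (O : finType) (null : O).

(* A strict preference over O: the ranking of all objects, best first. *)
Definition is_pref (p : seq O) : bool := perm_eq p (enum O).

Definition profile := {ffun 'I_n -> seq O}.
Definition allocation := {ffun 'I_n -> O}.
(* A rule maps profiles to allocations (only evaluated on profiles whose
   entries are preferences). *)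
Definition rule := profile -> allocation.

Definition oplus (I : {set O}) (gamma Q : seq O) : seq O :=
  gamma ++ [seq o <- Q | o \notin I].

Definition upd (P : profile) (a : 'I_n) (q : seq O) : profile :=
  [ffun b => if b == a then q else P b].

Definition chist := seq ({set O} * O).
Definition hist := {ffun 'I_n -> chist}.
Definition hist0 : hist := [ffun => [::]].

Definition last_menu (c : chist) : {set O} := (last (set0, null) c).1.
Definition last_choice (c : chist) : O := (last (set0, null) c).2.

Definition menufun := hist -> 'I_n -> {set O}.

Definition is_PAO (S : menufun) : Prop :=
  (forall i, S hist0 i != set0) /\
  (forall (h : hist) i, h i != [::] ->
     S h i \subset last_menu (h i) :\ last_choice (h i)).

Definition all_empty (S : menufun) (h : hist) : bool :=
  [forall i, S h i == set0].

Definition next (S : menufun) (h : hist) (c : 'I_n -> O) : hist :=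
  [ffun i => if S h i != set0 then rcons (h i) (S h i, c i) else h i].

Inductive reachable (S : menufun) : hist -> Prop :=
| reach0 : reachable S hist0
| reachS : forall h (c : 'I_n -> O), reachable S h -> ~~ all_empty S h ->
    (forall i, S h i != set0 -> c i \in S h i) ->
    reachable S (next S h c).

(* Strategies: own past history and current menu -> chosen object. *)
Definition strategy := chist -> {set O} -> O.
Definition valid_strategy (s : strategy) : Prop :=
  forall (c : chist) (M : {set O}), M != set0 -> s c M \in M.

Definition straightforward (p : seq O) : strategy :=
  fun _ M => head null [seq o <- p | o \in M].

Definition sf_profile (P : profile) : 'I_n -> strategy :=
  fun a => straightforward (P a).

Definition deviate (sig : 'I_n -> strategy) (a : 'I_n) (s : strategy)
  : 'I_n -> strategy := fun b => if b == a then s else sig b.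

Inductive runs (S : menufun) (sig : 'I_n -> strategy) : hist -> allocation -> Prop :=
| runs_stop : forall h, all_empty S h ->
    runs S sig h [ffun a => last_choice (h a)]
| runs_step : forall h mu, ~~ all_empty S h ->
    runs S sig (next S h (fun i => sig i (h i) (S h i))) mu ->
    runs S sig h mu.

Definition sequentializes (S : menufun) (phi : rule) : Prop :=
  forall P : profile, (forall a, is_pref (P a)) ->
    runs S (sf_profile P) hist0 (phi P).

End PAO.

From mathcomp Require Import all_boot.
(* Imported after all_boot, so that [next] is the step of the mechanism rather
   than the cycle successor of path.v. *)
Set Implicit Arguments. Unset Strict Implicit. Unset Printing Implicit Defensive.

(* Give every agent b the preference that lists her past choices in h, in the
   order she made them, followed by P_b.  In a PAO mechanism every menu lies
   inside the earlier menus and avoids the earlier choices, so straightforward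
   play for this preference from the empty history first re-creates b's part
   of h and then behaves exactly like straightforward play for P_b.  For the
   deviating agent, let P* list all her choices in the deviating run: playing
   straightforwardly for it reproduces that run.  Both runs from h are thus
   straightforward runs from scratch, whose outcomes are given by phi because
   S sequentializes phi; the two profiles differ only in the preference of a*,
   and both of those start with her choices in h.  Runs terminate because
   each choice strictly shrinks the chooser's future menus. *)

Section ChoiceHistories.
Variables (O : finType) (null : O).
Implicit Types (c : chist O) (M N X Y : {set O}) (x y : O) (p q : {set O} * O) (r : seq O).

Notation entry0 := ((set0 : {set O}), null).

Definition precedes p q : bool := (p.2 \in p.1) && (q.1 \subset p.1 :\ p.2).

(* The current menu [X] is appended as a last entry, whose choice [null] is
   never read: [precedes] only looks at the menu of its second argument. *)
Definition wf_chist c X : bool := pairwise precedes (rcons c (X, null)).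

Definition prepend_choices c r : seq O :=
  oplus [set x in map snd c] (map snd c) r.

Definition plays (s : strategy O) c (k : nat) : Prop :=
  forall j, k <= j < size c -> s (take j c) (nth entry0 c j).1 = (nth entry0 c j).2.

Lemma precedes_sub p M N x y :
  N \subset M -> precedes p (M, x) -> precedes p (N, y).
Proof. by move=> NM /andP[pp MP]; rewrite /precedes pp (subset_trans NM). Qed.

Lemma wf_chist_rcons c X x Y :
  wf_chist c X -> x \in X -> Y \subset X :\ x -> wf_chist (rcons c (X, x)) Y.
Proof.
rewrite /wf_chist !pairwise_rcons all_rcons => /andP[allX wfc] xX YX.
rewrite wfc andbT -andbA; apply/and3P; split => //; first by rewrite /precedes xX YX.
by apply: sub_all allX => p; apply: precedes_sub; apply: subset_trans YX (subsetDl _ _).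
Qed.

Lemma wf_chist_shrink c M x X Y :
  wf_chist (rcons c (M, x)) X -> Y \subset M :\ x -> wf_chist (rcons c (M, x)) Y.
Proof.
rewrite /wf_chist !pairwise_rcons !all_rcons.
move=> /andP[/andP[/andP[xM _] _] /[dup] wfc /andP[allM _]] YM.
rewrite wfc andbT; apply/andP; split.
  by rewrite /precedes xM YM.
by apply: sub_all allM => p; apply: precedes_sub; apply: subset_trans YM (subsetDl _ _).
Qed.

Lemma wf_chist_cat c1 c2 X :
  wf_chist (c1 ++ c2) X -> {in c1 & c2, forall p q, p.2 \notin q.1}.
Proof.
rewrite /wf_chist rcons_cat pairwise_cat => /and3P[/allrelP c12 _ _] p q pc1 qc2.
have /andP[_ /subsetP qp] := c12 p q pc1 (mem_subseq (subseq_rcons _ _) qc2).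
by apply/negP => /qp; rewrite !inE eqxx.
Qed.

Lemma wf_chist_uniq c X : wf_chist c X -> uniq (map snd c).
Proof.
elim: c => // p c IH; rewrite /wf_chist rcons_cons pairwise_cons => /andP[allp wfc].
rewrite /= IH // andbT.
apply/mapP => -[q qc pq].
have /andP[_ /subsetP qp] := allP allp q (mem_subseq (subseq_rcons _ _) qc).
move: wfc; rewrite pairwise_rcons => /andP[/allP/(_ q qc)/andP[qq _] _].
by move: (qp _ qq); rewrite -pq !inE eqxx.
Qed.

Lemma wf_chist_straightforward c X r j : wf_chist c X -> j < size c ->
  straightforward null (map snd c ++ r) (take j c) (nth entry0 c j).1
  = (nth entry0 c j).2.
Proof.
elim: c j => [|p c IH] [|j] wfpc jc //; move: wfpc.
all: rewrite /wf_chist rcons_cons pairwise_cons => /andP[allp wfc]; rewrite /straightforward /=.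
  by move: allp; rewrite all_rcons => /andP[/andP[-> _] _].
have cj_in : nth entry0 c j \in rcons c (X, null).
  by apply: (mem_subseq (subseq_rcons _ _)); exact: mem_nth.
have /andP[_ /subsetP cjp] := allP allp _ cj_in.
have -> : (p.2 \in (nth entry0 c j).1) = false.
  by apply/negbTE/negP => /cjp; rewrite !inE eqxx.
exact: IH.
Qed.

Lemma filter_oplus_avoid g r M : {in g, forall x, x \notin M} ->
  [seq o <- oplus [set x in g] g r | o \in M] = [seq o <- r | o \in M].
Proof.
move=> gM; rewrite /oplus filter_cat (eq_in_filter (a2 := pred0)); last first.
  by move=> x /gM /negbTE.
rewrite filter_pred0 -filter_predI; apply: eq_filter => x /=.
by case: (boolP (x \in M)) => //= xM; rewrite inE; apply/negP => /gM; rewrite xM.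
Qed.

Lemma prefix_rcons_take_nth c e c' :
  prefix (rcons c e) c' -> take (size c) c' = c /\ nth entry0 c' (size c) = e.
Proof. by case/prefixP => t ->; rewrite cat_rcons take_size_cat // nth_cat ltnn subnn. Qed.

Lemma plays_prefix s c c' k : prefix c c' -> plays s c' k -> plays s c k.
Proof.
case/prefixP => t -> play j /andP[kj jc]; have := play j.
by rewrite take_cat nth_cat jc kj size_cat ltn_addr //; apply.
Qed.

Lemma plays_choice s c M x c' k :
  prefix (rcons c (M, x)) c' -> k <= size c -> plays s c' k -> s c M = x.
Proof.
move=> /[dup] /size_prefix; rewrite size_rcons => cc' /prefix_rcons_take_nth[tk nt] kc play.
by have := play (size c); rewrite tk nt kc cc'; apply.
Qed.

Lemma plays_rcons s c M c' :
  prefix (rcons c (M, s c M)) c' -> plays s c' (size c).+1 -> plays s c' (size c).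
Proof.
move=> /prefix_rcons_take_nth[tk nt] play j /andP[]; rewrite leq_eqVlt.
by case/orP => [/eqP <- _|cj jc']; [rewrite tk nt | apply: play; rewrite cj].
Qed.

Lemma playsW s c k k' : k <= k' -> plays s c k -> plays s c k'.
Proof. by move=> kk' play j /andP[k'j jc]; rewrite play // (leq_trans kk' k'j). Qed.

Lemma plays_choices c X r :
  wf_chist c X -> plays (straightforward null (map snd c ++ r)) c 0.
Proof. by move=> wfc j /andP[_ jc]; apply: wf_chist_straightforward wfc jc. Qed.

Lemma plays_prepend_choices c1 c2 X Y r :
  wf_chist c1 Y -> wf_chist (c1 ++ c2) X ->
  plays (straightforward null r) (c1 ++ c2) (size c1) ->
  plays (straightforward null (prepend_choices c1 r)) (c1 ++ c2) 0.
Proof.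
move=> wf1 wf12 play j /andP[_ jc]; case: (ltnP j (size c1)) => jc1.
  rewrite nth_cat jc1; exact: wf_chist_straightforward wf1 jc1.
rewrite -play ?jc1 // /straightforward filter_oplus_avoid // => _ /mapP[p pc1 ->].
apply: wf_chist_cat wf12 _ _ pc1 _; rewrite nth_cat ltnNge jc1 /= mem_nth //.
by rewrite -(ltn_add2l (size c1)) subnKC // -size_cat.
Qed.

Lemma is_pref_oplus g r : uniq g -> is_pref r -> is_pref (oplus [set x in g] g r).
Proof.
move=> ug pr; apply: uniq_perm; rewrite ?enum_uniq //.
  rewrite cat_uniq ug filter_uniq ?(perm_uniq pr) ?enum_uniq // andbT /=.
  by apply/hasPn => x; rewrite mem_filter inE => /andP[].
by move=> x; rewrite mem_cat mem_filter inE (perm_mem pr) !mem_enum; case: (x \in g).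
Qed.

Lemma straightforward_valid r : is_pref r -> valid_strategy (straightforward null r).
Proof.
move=> pr c M /set0Pn[x xM]; rewrite /straightforward.
have xrM : x \in [seq o <- r | o \in M] by rewrite mem_filter xM (perm_mem pr) mem_enum.
have : head null [seq o <- r | o \in M] \in [seq o <- r | o \in M].
  by case: [seq o <- r | o \in M] xrM => // y s _; exact: mem_head.
by rewrite mem_filter => /andP[].
Qed.

End ChoiceHistories.

Section Runs.
Variables (n : nat) (O : finType) (null : O) (S : menufun n O).
Hypothesis PAO_S : is_PAO null S.
Implicit Types (h : hist n O) (sig : 'I_n -> strategy O) (c : 'I_n -> O).

Definition choices_in_menus h c : Prop := forall i, S h i != set0 -> c i \in S h i.

Inductive reachable_from (h0 : hist n O) : hist n O -> Prop :=
| reachable_from_refl : reachable_from h0 h0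
| reachable_from_next h c : reachable_from h0 h -> ~~ all_empty S h ->
    choices_in_menus h c -> reachable_from h0 (next S h c).

Definition outcome h : allocation n O := [ffun a => last_choice null (h a)].

Definition follows sig h0 h : Prop :=
  forall i, plays null (sig i) (h i) (size (h0 i)).

Lemma reachable_from_hist0 h : reachable S h -> reachable_from (hist0 n O) h.
Proof. by elim=> [|h' c _ IH go cc]; constructor. Qed.

Lemma reachable_from_reachable h0 h :
  reachable S h0 -> reachable_from h0 h -> reachable S h.
Proof. by move=> r0; elim=> // h' c _ IH go cc; apply: reachS. Qed.

Lemma reachable_from_trans h1 h2 h3 :
  reachable_from h1 h2 -> reachable_from h2 h3 -> reachable_from h1 h3.
Proof. by move=> r12; elim=> // h c _ IH go cc; apply: reachable_from_next. Qed.

Lemma reachable_from_first h c h' : ~~ all_empty S h -> choices_in_menus h c ->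
  reachable_from (next S h c) h' -> reachable_from h h'.
Proof.
move=> go cc; elim=> [|h'' c' _ IH go' cc']; apply: reachable_from_next => //.
exact: reachable_from_refl.
Qed.

Lemma next_prefix h c i : prefix (h i) (next S h c i).
Proof. by rewrite ffunE; case: ifP => _; rewrite ?prefix_rcons ?prefix_refl. Qed.

Lemma reachable_from_prefix h0 h : reachable_from h0 h -> forall i, prefix (h0 i) (h i).
Proof.
elim=> [|h' c _ IH _ _] i; first exact: prefix_refl.
exact: prefix_trans (IH i) (next_prefix h' c i).
Qed.

Lemma wf_next h c : (forall i, wf_chist null (h i) (S h i)) -> choices_in_menus h c ->
  forall i, wf_chist null (next S h c i) (S (next S h c) i).
Proof.
move=> wfh cc i; have [_ shrink] := PAO_S; have := shrink (next S h c) i.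
rewrite [next S h c i]ffunE; case: ifP => [Si|_].
  have ne : rcons (h i) (S h i, c i) != [::] by rewrite -size_eq0 size_rcons.
  move/(_ ne); rewrite /last_menu /last_choice last_rcons.
  exact: wf_chist_rcons (wfh i) (cc i Si).
have := wfh i; case: (lastP (h i)) => [//|c' [M x] wfc].
have ne : rcons c' (M, x) != [::] by rewrite -size_eq0 size_rcons.
move/(_ ne); rewrite /last_menu /last_choice last_rcons.
exact: wf_chist_shrink wfc.
Qed.

Lemma reachable_from_wf h0 h : (forall i, wf_chist null (h0 i) (S h0 i)) ->
  reachable_from h0 h -> forall i, wf_chist null (h i) (S h i).
Proof. by move=> wf0; elim=> // h' c _ IH _; apply: wf_next. Qed.

Lemma reachable_wf h : reachable S h -> forall i, wf_chist null (h i) (S h i).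
Proof.
by move/reachable_from_hist0; apply: reachable_from_wf => i; rewrite ffunE.
Qed.

Lemma runs_unique sig h mu1 mu2 :
  runs null S sig h mu1 -> runs null S sig h mu2 -> mu1 = mu2.
Proof.
move=> run1; elim: run1 mu2 => [h' stop|h' mu go _ IH] mu2 run2.
  by case: run2 stop => // h'' mu'' /negbTE ->.
by case: run2 go IH => [h'' -> //|h'' mu'' _ run2 _ IH]; apply: IH.
Qed.

(* By the PAO condition, an agent's potential bounds the size of all her later
   menus, and it drops strictly whenever she chooses. *)
Definition chist_potential (ch : chist O) : nat :=
  if ch is [::] then #|O|.+1 else #|last_menu null ch :\ last_choice null ch|.

Definition potential h : nat := \sum_i chist_potential (h i).

Lemma menu_le_potential h i : #|S h i| <= chist_potential (h i).
Proof.
case: PAO_S => _ shrink; case E: (h i) => [|e ch]; first exact: leq_trans (max_card _) _.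
by apply: subset_leq_card; rewrite -E; apply: shrink; rewrite E.
Qed.

Lemma chist_potential_rcons ch e : chist_potential (rcons ch e) = #|e.1 :\ e.2|.
Proof. by case: ch => [|e' ch]; rewrite /chist_potential /last_menu /last_choice ?last_rcons. Qed.

Lemma potential_next h c : ~~ all_empty S h -> choices_in_menus h c ->
  potential (next S h c) < potential h.
Proof.
move=> /forallPn[i0 Si0] cc.
have drop i : S h i != set0 -> chist_potential (next S h c i) < chist_potential (h i).
  move=> Si; rewrite ffunE Si chist_potential_rcons /=.
  by apply: leq_trans (menu_le_potential h i); rewrite [X in _ < X](cardsD1 (c i)) cc.
rewrite /potential (bigD1 i0) //= [X in _ < X](bigD1 i0) //= -addSn.
apply: leq_add; first exact: drop.
apply: leq_sum => i _; case: (boolP (S h i != set0)) => [/drop/ltnW //|].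
by rewrite ffunE => /negbTE ->.
Qed.

Lemma runs_exists sig : (forall i, valid_strategy (sig i)) ->
  forall h, exists mu, runs null S sig h mu.
Proof.
move=> valid h; have [k] := ubnP (potential h); elim: k h => // k IH h /ltnSE hk.
case: (boolP (all_empty S h)) => [stop|go].
  by exists (outcome h); apply: runs_stop.
have cc : choices_in_menus h (fun i => sig i (h i) (S h i)) by move=> i; apply: valid.
have [mu run] := IH _ (leq_trans (potential_next go cc) hk).
by exists mu; apply: runs_step go run.
Qed.

Lemma runs_trace sig h mu : (forall i, valid_strategy (sig i)) ->
  runs null S sig h mu ->
  exists2 hf, [/\ reachable_from h hf, all_empty S hf & follows sig h hf] & mu = outcome hf.
Proof.
move=> valid; elim=> [h' stop|h' mu' go _ [hf [reach stop play] ->]].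
  exists h' => //; split=> //; first exact: reachable_from_refl.
  by move=> i j; rewrite ltnNge andbN.
set c := fun i => sig i (h' i) (S h' i).
have cc : choices_in_menus h' c by move=> i; apply: valid.
exists hf => //; split=> //; first exact: reachable_from_first go cc reach.
move=> i; have := play i; have := reachable_from_prefix reach i.
by rewrite [next S h' c i]ffunE; case: ifP => // _; rewrite size_rcons; apply: plays_rcons.
Qed.

Lemma runs_replay sig h0 h mu : reachable_from h0 h -> follows sig h0 h ->
  runs null S sig h mu -> runs null S sig h0 mu.
Proof.
elim=> // h' c r0 IH go cc play run; apply: IH => [i|].
  exact: plays_prefix (next_prefix h' c i) (play i).
have sig_c : next S h' (fun i => sig i (h' i) (S h' i)) = next S h' c.
  apply/ffunP => i; rewrite !ffunE; case: ifP => // Si.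
  congr (rcons _ (_, _)); apply: (plays_choice _ _ (play i)).
    by rewrite ffunE Si prefix_refl.
  exact: size_prefix (reachable_from_prefix r0 i).
by apply: runs_step go _; rewrite sig_c.
Qed.

Lemma outcome_sequentialized phi h hf (Q : profile n O) :
  sequentializes null S phi -> reachable S h -> reachable_from h hf ->
  all_empty S hf -> (forall i, is_pref (Q i)) ->
  (forall i, plays null (straightforward null (Q i)) (hf i) (size (h i))) ->
  outcome hf = phi [ffun i => prepend_choices (h i) (Q i)].
Proof.
move=> seq_phi rh rhf stop prefQ playQ.
have wf_h := reachable_wf rh.
have wf_hf := reachable_wf (reachable_from_reachable rh rhf).
have prefQ' : forall i, is_pref ([ffun i => prepend_choices (h i) (Q i)] i).
  by move=> i; rewrite ffunE; apply: is_pref_oplus (wf_chist_uniq (wf_h i)) (prefQ i).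
apply: runs_unique (seq_phi _ prefQ').
apply: runs_replay (reachable_from_trans (reachable_from_hist0 rh) rhf) _ (runs_stop _ _ stop).
move=> i; rewrite /sf_profile !ffunE /=.
move: (wf_hf i) (playQ i); case/prefixP: (reachable_from_prefix rhf i) => t ->.
exact: plays_prepend_choices (wf_h i).
Qed.

End Runs.

Theorem lemma1 (n : nat) (O : finType) (null : O)
  (phi : rule n O) (S : menufun n O)
  (HS : is_PAO null S) (Hseq : sequentializes null S phi)
  (h : hist n O) (Hh : reachable S h)
  (P : profile n O) (HP : forall a, is_pref (P a))
  (astar : 'I_n) (sig' : strategy O) (Hsig : valid_strategy sig') :
  exists (mu1 mu2 : allocation n O),
    runs null S (sf_profile null P) h mu1 /\
    runs null S (deviate (sf_profile null P) astar sig') h mu2 /\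
    exists (I : {set O}) (gamma : seq O) (Pstar : seq O) (P' : profile n O),
      [/\ perm_eq gamma (enum I), is_pref Pstar, (forall b, is_pref (P' b)),
          mu1 astar = phi (upd P' astar (oplus I gamma (P astar))) astar &
          mu2 astar = phi (upd P' astar (oplus I gamma Pstar)) astar].
Proof.
set sig1 := sf_profile null P; set sig2 := deviate sig1 astar sig'.
have valid1 i : valid_strategy (sig1 i) by apply: straightforward_valid.
have valid2 i : valid_strategy (sig2 i) by rewrite /sig2 /deviate; case: eqP.
have [mu1 run1] := runs_exists HS valid1 h.
have [mu2 run2] := runs_exists HS valid2 h.
exists mu1, mu2; do 2!split => //.
have [hf1 [reach1 stop1 play1] ->] := runs_trace valid1 run1.
have [hf2 [reach2 stop2 play2] ->] := runs_trace valid2 run2.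
have wf_h := reachable_wf HS Hh.
have wf_hf2 := reachable_wf HS (reachable_from_reachable Hh reach2) astar.
pose Pstar := prepend_choices (hf2 astar) (enum O).
have prefPstar : is_pref Pstar by apply: is_pref_oplus (wf_chist_uniq wf_hf2) (perm_refl _).
pose P' : profile n O := [ffun b => prepend_choices (h b) (P b)].
exists [set x in map snd (h astar)], (map snd (h astar)), Pstar, P'; split.
- apply: uniq_perm (wf_chist_uniq (wf_h astar)) (enum_uniq _) _ => x.
  by rewrite mem_enum inE.
- exact: prefPstar.
- by move=> b; rewrite ffunE; apply: is_pref_oplus (wf_chist_uniq (wf_h b)) (HP b).
- rewrite (outcome_sequentialized HS Hseq Hh reach1 stop1 HP play1).
  by apply: (congr1 (fun R => phi R astar)); apply/ffunP => b; rewrite !ffunE; case: eqP => // ->.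
pose Q := upd P astar Pstar.
have prefQ b : is_pref (Q b) by rewrite ffunE; case: eqP.
have playQ b : plays null (straightforward null (Q b)) (hf2 b) (size (h b)).
  rewrite ffunE; case: eqP => [->|/eqP ne]; first exact: playsW (plays_choices _ wf_hf2).
  by have := play2 b; rewrite /sig2 /deviate (negbTE ne).
rewrite (outcome_sequentialized HS Hseq Hh reach2 stop2 prefQ playQ).
by apply: (congr1 (fun R => phi R astar)); apply/ffunP => b; rewrite !ffunE; case: eqP => // ->.
Qed.
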